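(* Let $S$ be a semigroup with identity element and group of units $G$, and suppose $S\setminus G$ is a subsemigroup of $S$. Then $G$ is a completely isolated subsemigroup of $S$, and the map $T\mapsto T\cup G$ is a bijection from the set of completely isolated subsemigroups of $S$ that are disjoint from $G$ onto the set of completely isolated subsemigroups of $S$ that contain $G$ as a proper subsemigroup.
   Context: A subsemigroup $T$ of a semigroup $S$ is completely isolated if for all $a,b\in S$, $ab\in T$ implies $a\in T$ or $b\in T$. *)

(* abstract semigroups given by a carrier and an operation.
   Subsets of the carrier are predicates S -> Prop, compared with Leibniz
   equality (sets are extensional). *)

Section Semigroups.
Context {S : Type}.
Variable mul : S -> S -> S.

Definition associative_op : Prop :=
  forall x y z, mul x (mul y z) = mul (mul x y) z.

Definition is_identity (e : S) : Prop :=
  forall x, mul e x = x /\ mul x e = x.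

Definition units (e : S) : S -> Prop :=
  fun x => exists y, mul x y = e /\ mul y x = e.

Definition subsemigroup (T : S -> Prop) : Prop :=
  (exists x, T x) /\ (forall x y, T x -> T y -> T (mul x y)).

Definition completely_isolated (T : S -> Prop) : Prop :=
  subsemigroup T /\ (forall a b, T (mul a b) -> T a \/ T b).

End Semigroups.

Definition setU {S : Type} (A B : S -> Prop) : S -> Prop := fun x => A x \/ B x.
Definition setC {S : Type} (A : S -> Prop) : S -> Prop := fun x => ~ A x.
Definition disjoint {S : Type} (A B : S -> Prop) : Prop := forall x, A x -> B x -> False.
Definition subset {S : Type} (A B : S -> Prop) : Prop := forall x, A x -> B x.
Definition proper_subset {S : Type} (A B : S -> Prop) : Prop :=
  subset A B /\ exists x, B x /\ ~ A x.

Definition bijection_between {X Y : Type} (Dom : X -> Prop) (Cod : Y -> Prop)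
  (f : X -> Y) : Prop :=
  (forall x, Dom x -> Cod (f x)) /\
  (forall x1 x2, Dom x1 -> Dom x2 -> f x1 = f x2 -> x1 = x2) /\
  (forall y, Cod y -> exists x, Dom x /\ f x = y).

(* Because S \ G is closed under multiplication, a product lies in G only if
   one of its factors does, so G is completely isolated.  A completely
   isolated T disjoint from G absorbs units on both sides: t = (t g) g^-1 and
   g^-1 is not in T, hence t g is in T; this makes T ∪ G closed, and it is
   isolated because T and G are.  Conversely, for a completely isolated U
   properly containing G, the set U \ G is closed since S \ G is, and isolated
   since a unit factor of a product in U can be cancelled inside U.  Thus
   U ↦ U \ G inverts T ↦ T ∪ G. *)

From Stdlib Require Import Classical FunctionalExtensionality PropExtensionality.

Definition setD {S : Type} (A B : S -> Prop) : S -> Prop := fun x => A x /\ ~ B x.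

Lemma set_ext {S : Type} (A B : S -> Prop) : (forall x, A x <-> B x) -> A = B.
Proof.
  intros H. apply functional_extensionality; intros x.
  apply propositional_extensionality, H.
Qed.

Lemma setU_inj_disjoint {S : Type} (A1 A2 B : S -> Prop) :
  disjoint A1 B -> disjoint A2 B -> setU A1 B = setU A2 B -> A1 = A2.
Proof.
  intros D1 D2 E. apply set_ext; intros x.
  assert (Ex : A1 x \/ B x <-> A2 x \/ B x) by (change (setU A1 B x <-> setU A2 B x); now rewrite E).
  split; intros H.
  - destruct (proj1 Ex (or_introl H)) as [H2 | HB]; [exact H2 | exfalso; exact (D1 x H HB)].
  - destruct (proj2 Ex (or_introl H)) as [H1 | HB]; [exact H1 | exfalso; exact (D2 x H HB)].
Qed.

Lemma setDU {S : Type} (A B : S -> Prop) : subset B A -> setU (setD A B) B = A.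
Proof.
  intros HBA. apply set_ext; intros x. unfold setU, setD. split.
  - intros [[HA _] | HB]; [exact HA | exact (HBA x HB)].
  - intros HA. destruct (classic (B x)) as [HB | HnB]; [now right | now left].
Qed.

Lemma proper_subset_setU {S : Type} (A B : S -> Prop) :
  (exists x, A x) -> disjoint A B -> proper_subset B (setU A B).
Proof.
  intros [a Ha] D. split.
  - intros x Hx. now right.
  - exists a. split; [now left | exact (D a Ha)].
Qed.

Section UnitsOfMonoid.

Context {S : Type} (mul : S -> S -> S) (e : S).
Hypothesis mulA : associative_op mul.
Hypothesis mul1 : is_identity mul e.

Local Notation G := (units mul e).

Lemma units_e : G e.
Proof. exists e. split; apply mul1. Qed.

Lemma units_mul x y : G x -> G y -> G (mul x y).
Proof.
  intros [x' [Hxx' Hx'x]] [y' [Hyy' Hy'y]]. exists (mul y' x'). split.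
  - rewrite <- mulA, (mulA y y' x'), Hyy', (proj1 (mul1 x')). exact Hxx'.
  - rewrite <- mulA, (mulA x' x y), Hx'x, (proj1 (mul1 y)). exact Hy'y.
Qed.

Lemma units_inv x : G x -> exists y, G y /\ mul x y = e /\ mul y x = e.
Proof.
  intros [y [Hxy Hyx]]. exists y. repeat split; try assumption.
  now exists x.
Qed.

Lemma mulK x g g' : mul g g' = e -> mul (mul x g) g' = x.
Proof. intros H. rewrite <- mulA, H. apply mul1. Qed.

Lemma mulKV x g g' : mul g' g = e -> mul g' (mul g x) = x.
Proof. intros H. rewrite mulA, H. apply mul1. Qed.

Lemma units_completely_isolated :
  subsemigroup mul (setC G) -> completely_isolated mul G.
Proof.
  intros [_ HnG]. split; [split; [exists e; exact units_e | exact units_mul] |].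
  intros a b Hab.
  destruct (classic (G a)) as [Ha | Ha]; [now left |].
  destruct (classic (G b)) as [Hb | Hb]; [now right |].
  exfalso. exact (HnG a b Ha Hb Hab).
Qed.

Section DisjointFromUnits.

Variable T : S -> Prop.
Hypothesis T_isolated : completely_isolated mul T.
Hypothesis T_disjoint : disjoint T G.

Lemma isolated_mul_unit_r t g : T t -> G g -> T (mul t g).
Proof.
  intros Ht Hg. destruct (units_inv g Hg) as [g' [Hg' [Hgg' _]]].
  rewrite <- (mulK t g g' Hgg') in Ht.
  destruct (proj2 T_isolated _ _ Ht) as [H | H]; [exact H |].
  exfalso. exact (T_disjoint g' H Hg').
Qed.

Lemma isolated_mul_unit_l t g : T t -> G g -> T (mul g t).
Proof.
  intros Ht Hg. destruct (units_inv g Hg) as [g' [Hg' [_ Hg'g]]].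
  rewrite <- (mulKV t g g' Hg'g) in Ht.
  destruct (proj2 T_isolated _ _ Ht) as [H | H]; [| exact H].
  exfalso. exact (T_disjoint g' H Hg').
Qed.

Lemma isolated_setU_units :
  subsemigroup mul (setC G) -> completely_isolated mul (setU T G).
Proof.
  intros HnG. destruct T_isolated as [[_ HTmul] HTiso].
  destruct (units_completely_isolated HnG) as [_ HGiso].
  split; [split |].
  - exists e. right. exact units_e.
  - intros x y [Hx | Hx] [Hy | Hy]; unfold setU.
    + left. now apply HTmul.
    + left. now apply isolated_mul_unit_r.
    + left. now apply isolated_mul_unit_l.
    + right. now apply units_mul.
  - intros a b [H | H].
    + destruct (HTiso a b H); [left | right]; now left.
    + destruct (HGiso a b H); [left | right]; now right.
Qed.

End DisjointFromUnits.

Section ContainingUnits.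

Variable U : S -> Prop.
Hypothesis U_isolated : completely_isolated mul U.
Hypothesis U_supset : subset G U.

Lemma isolated_cancel_unit_l g x : G g -> U (mul g x) -> U x.
Proof.
  intros Hg Hgx. destruct (units_inv g Hg) as [g' [Hg' [_ Hg'g]]].
  rewrite <- (mulKV x g g' Hg'g).
  apply (proj2 (proj1 U_isolated)); [exact (U_supset g' Hg') | exact Hgx].
Qed.

Lemma isolated_cancel_unit_r g x : G g -> U (mul x g) -> U x.
Proof.
  intros Hg Hxg. destruct (units_inv g Hg) as [g' [Hg' [Hgg' _]]].
  rewrite <- (mulK x g g' Hgg').
  apply (proj2 (proj1 U_isolated)); [exact Hxg | exact (U_supset g' Hg')].
Qed.

Lemma isolated_setD_units :
  subsemigroup mul (setC G) -> proper_subset G U -> completely_isolated mul (setD U G).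
Proof.
  intros [_ HnG] [_ [u [Hu Hnu]]]. destruct U_isolated as [[_ HUmul] HUiso].
  split; [split |].
  - exists u. now split.
  - intros x y [Hx Hnx] [Hy Hny]. split; [now apply HUmul | exact (HnG x y Hnx Hny)].
  - intros a b [Hab Hnab].
    assert (HnGab : ~ (G a /\ G b)) by (intros [Ha Hb]; exact (Hnab (units_mul a b Ha Hb))).
    destruct (classic (G a)) as [Ha | Ha].
    + right. split; [exact (isolated_cancel_unit_l a b Ha Hab) | tauto].
    + destruct (classic (G b)) as [Hb | Hb].
      * left. split; [exact (isolated_cancel_unit_r b a Hb Hab) | exact Ha].
      * destruct (HUiso a b Hab); [left | right]; now split.
Qed.

End ContainingUnits.

End UnitsOfMonoid.

Theorem mainTheorem19 (S : Type) (mul : S -> S -> S) (e : S)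
  (Hassoc : associative_op mul) (He : is_identity mul e)
  (Hcompl : subsemigroup mul (setC (units mul e))) :
  let G := units mul e in
  completely_isolated mul G /\
  bijection_between
    (fun T : S -> Prop => completely_isolated mul T /\ disjoint T G)
    (fun U : S -> Prop => completely_isolated mul U /\ proper_subset G U)
    (fun T : S -> Prop => setU T G).
Proof.
  intros G.
  split; [exact (units_completely_isolated mul e Hassoc He Hcompl) |].
  split; [| split].
  - intros T [HT HTG]. split.
    + exact (isolated_setU_units mul e Hassoc He T HT HTG Hcompl).
    + exact (proper_subset_setU T G (proj1 (proj1 HT)) HTG).
  - intros T1 T2 [_ D1] [_ D2]. exact (setU_inj_disjoint T1 T2 G D1 D2).
  - intros U [HU HGU]. exists (setD U G). split; [split |].
    + exact (isolated_setD_units mul e Hassoc He U HU (proj1 HGU) Hcompl HGU).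
    + intros x [_ Hnx] Hx. exact (Hnx Hx).
    + exact (setDU U G (proj1 HGU)).
Qed.
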